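(* If $(\Phi,\{\Phi_{f,x}\}_{x\in D},D)$ is a labeled compact information algebra, then its associated domain-free information algebra $(\Phi/\sigma,D)$ is a domain-free compact information algebra. Furthermore, if $(\Phi,\{\Phi_{f,x}\}_{x\in D},D)$ is a labeled s-compact information algebra, then $(\Phi/\sigma,D)$ is a domain-free s-compact information algebra.
   Context: A labeled information algebra $(\Phi,D)$ consists of a lattice $D$, a set $\Phi$ with labeling $d:\Phi\to D$, combination $\otimes$ and marginalization $\phi^{\downarrow x}$ for $x\le d(\phi)$, such that: $\otimes$ is associative and commutative; for each $s\in D$ there is $e_s$ with $d(e_s)=s$ and $e_s\otimes\phi=\phi$ whenever $d(\phi)=s$; $d(\phi\otimes\psi)=d(\phi)\vee d(\psi)$; $d(\phi^{\downarrow x})=x$; $(\phi^{\downarrow y})^{\downarrow x}=\phi^{\downarrow x}$ for $x\le y\le d(\phi)$; $(\phi\otimes\psi)^{\downarrow x}=\phi\otimes\psi^{\downarrow x\wedge y}$ when $d(\phi)=x$, $d(\psi)=y$; $e_y^{\downarrow x}=e_x$ for $x\le y$; $\phi\otimes\phi^{\downarrow x}=\phi$. In any (labeled or domain-free) information algebra, $\psi\le\phi$ iff $\psi\otimes\phi=\phi$; suprema refer to this order; $a\ll b$ means: for every directed $X$ with $b\le\vee X$ there is $c\in X$ with $a\le c$. $\Phi_x=\{\phi:d(\phi)=x\}$, $\ll_x$ is the way-below relation in $(\Phi_x,\le)$, and $\Phi_{f,x}=\{\psi\in\Phi_x:\psi\ll_x\psi\}$. A labeled compact (resp. s-compact) information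 algebra $(\Phi,\{\Gamma_x\}_{x\in D},D)$: $D$ has a top element $\top$, each $\Gamma_x\subseteq\Phi_x$ is closed under combination and contains $e_x$, and (convergency) every directed $X\subseteq\Gamma_x$ has a supremum $\vee X\in\Phi_x$; (density) $\phi=\vee\{\psi\in\Gamma_x:\psi\ll_x\phi\}$ for all $\phi\in\Phi_x$ (resp. (strong density) $\phi=\vee\{\psi^{\downarrow x}\in\Gamma_x:\ \psi\in\Phi,\ x\le d(\psi),\ \psi^{\downarrow x}\otimes e_\top\in\Gamma_\top,\ \psi^{\downarrow x}\ll_x\phi\}$ for all $\phi\in\Phi_x$); (compactness) for every directed $X\subseteq\Gamma_x$ and $\phi\in\Gamma_x$ with $\phi\le\vee X$ there is $\psi\in X$ with $\phi\le\psi$. In this case $\Gamma_x=\Phi_{f,x}$. The associated domain-free algebra: for $y\ge d(\phi)$ let $\phi^{\uparrow y}=\phi\otimes e_y$; $\phi\equiv\psi\pmod\sigma$ iff $\phi^{\uparrow d(\phi)\vee d(\psi)}=\psi^{\uparrow d(\phi)\vee d(\psi)}$; on $\Phi/\sigma$, $[\phi]_\sigma\otimes[\psi]_\sigma=[\phi\otimes\psi]_\sigma$ and $[\phi]_\sigma^{\Rightarrow x}=[(\phi^{\uparrow x\vee d(\phi)})^{\downarrow x}]_\sigma$. A domain-free information algebra $(\Phi',D)$ (combination associative, commutative, with neutral element $e$, focusing $\Rightarrow$ satisfying transitivity, combination, support and idempotency axioms), with $D$ having a top element, is compact (resp. s-compact) if there exists $\Gamma\subseteq\Phi'$, closed under combination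 and containing $e$, such that every directed subset of $\Gamma$ has a supremum in $\Phi'$; $\phi=\vee\{\psi\in\Gamma:\psi\ll\phi\}$ for all $\phi$ (resp. $\phi^{\Rightarrow x}=\vee\{\psi\in\Gamma:\psi=\psi^{\Rightarrow x}\ll\phi\}$ for all $\phi,x$); and for every directed $X\subseteq\Gamma$ and $\phi\in\Gamma$ with $\phi\le\vee X$ there is $\psi\in X$ with $\phi\le\psi$. *)

From HB Require Import structures.
From mathcomp Require Import all_boot all_order.
From Stdlib Require Import ClassicalEpsilon.

Unset Printing Implicit Defensive.

Import Order.LTheory.
Local Open Scope order_scope.

Section Poset.
Variables (T : Type) (le : T -> T -> Prop).

Definition directed (X : T -> Prop) : Prop :=
  (exists a, X a) /\
  (forall a b, X a -> X b -> exists c, X c /\ le a c /\ le b c).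

Definition is_sup_in (P X : T -> Prop) (s : T) : Prop :=
  P s /\ (forall a, X a -> le a s) /\
  (forall u, P u -> (forall a, X a -> le a u) -> le s u).

Definition way_below_in (P : T -> Prop) (a b : T) : Prop :=
  forall X : T -> Prop, (forall c, X c -> P c) -> directed X ->
  forall s, is_sup_in P X s -> le b s -> exists c, X c /\ le a c.

End Poset.
Arguments directed {T} le X.
Arguments is_sup_in {T} le P X s.
Arguments way_below_in {T} le P a b.

Definition allT {T : Type} : T -> Prop := fun _ => True.

(* Signature: carrier Phi, labeling d, combination, marginalization
   (total function; only meaningful for x <= d phi), neutral elements e_s. *)
Record LSig (disp : Order.disp_t) (D : tLatticeType disp) := MkLSig {
  car : Type;
  lab : car -> D;
  lcomb : car -> car -> car;
  lmarg : car -> D -> car;   (* lmarg phi x = phi^{down x} *)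
  lneut : D -> car
}.
Arguments LSig {disp} D.
Arguments car {disp D} l.
Arguments lab {disp D} l _.
Arguments lcomb {disp D} l _ _.
Arguments lmarg {disp D} l _ _.
Arguments lneut {disp D} l _.

Section Labeled.
Context {disp : Order.disp_t} {D : tLatticeType disp} (A : LSig D).

Local Notation Phi := (car A).
Local Notation d := (@lab _ _ A).
Local Notation comb := (@lcomb _ _ A).
Local Notation marg := (@lmarg _ _ A).
Local Notation e := (@lneut _ _ A).

Definition labeled_info_algebra : Prop :=
  (forall a b c, comb a (comb b c) = comb (comb a b) c) /\
  (forall a b, comb a b = comb b a) /\
  (forall s, d (e s) = s) /\
  (forall s phi, d phi = s -> comb (e s) phi = phi) /\
  (forall a b, d (comb a b) = d a `|` d b) /\
  (forall phi x, x <= d phi -> d (marg phi x) = x) /\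
  (forall phi x y, x <= y -> y <= d phi -> marg (marg phi y) x = marg phi x) /\
  (forall phi psi x y, d phi = x -> d psi = y ->
       marg (comb phi psi) x = comb phi (marg psi (x `&` y))) /\
  (forall x y, x <= y -> marg (e y) x = e x) /\
  (forall phi x, x <= d phi -> comb phi (marg phi x) = phi).

Definition lle (psi phi : Phi) : Prop := comb psi phi = phi.

Definition Phi_x (x : D) : Phi -> Prop := fun phi => d phi = x.

Definition ll_x (x : D) (a b : Phi) : Prop := way_below_in lle (Phi_x x) a b.

Definition Phi_f (x : D) : Phi -> Prop := fun psi => Phi_x x psi /\ ll_x x psi psi.

Definition labeled_compact_base (Gamma : D -> Phi -> Prop) : Prop :=
  labeled_info_algebra /\
  (forall x psi, Gamma x psi -> d psi = x) /\
  (forall x a b, Gamma x a -> Gamma x b -> Gamma x (comb a b)) /\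
  (forall x, Gamma x (e x)) /\
  (forall x (X : Phi -> Prop), (forall a, X a -> Gamma x a) -> directed lle X ->
     exists s, is_sup_in lle (Phi_x x) X s) /\
  (forall x (X : Phi -> Prop) phi, (forall a, X a -> Gamma x a) -> directed lle X ->
     Gamma x phi -> forall s, is_sup_in lle (Phi_x x) X s -> lle phi s ->
     exists psi, X psi /\ lle phi psi).

Definition labeled_compact (Gamma : D -> Phi -> Prop) : Prop :=
  labeled_compact_base Gamma /\
  (forall x phi, d phi = x ->
     is_sup_in lle (Phi_x x) (fun psi => Gamma x psi /\ ll_x x psi phi) phi).

Definition labeled_scompact (Gamma : D -> Phi -> Prop) : Prop :=
  labeled_compact_base Gamma /\
  (forall x phi, d phi = x ->
     is_sup_in lle (Phi_x x)
       (fun chi => exists psi, x <= d psi /\ chi = marg psi x /\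
                   Gamma x chi /\ Gamma \top (comb chi (e \top)) /\
                   ll_x x chi phi)
       phi).

Definition vac (phi : Phi) (y : D) : Phi := comb phi (e y).   (* phi^{up y} *)

Definition sigma (phi psi : Phi) : Prop :=
  vac phi (d phi `|` d psi) = vac psi (d phi `|` d psi).

Record QT := MkQT { qpred : Phi -> Prop; qprop : exists phi, qpred = sigma phi }.

Definition cls (phi : Phi) : QT := @MkQT (sigma phi) (ex_intro _ phi erefl).

Definition rep (q : QT) : Phi :=
  proj1_sig (constructive_indefinite_description _ (qprop q)).

Definition qcomb (a b : QT) : QT := cls (comb (rep a) (rep b)).

Definition qfocus (a : QT) (x : D) : QT :=
  cls (marg (vac (rep a) (x `|` d (rep a))) x).

Definition qneut : QT := cls (e \top).

End Labeled.
Arguments QT {disp D} A.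
Arguments MkQT {disp D A} qpred qprop.
Arguments qprop {disp D A} q.

Section DomainFree.
Context {disp : Order.disp_t} {D : tLatticeType disp}.
Variables (T : Type) (comb : T -> T -> T) (e : T) (focus : T -> D -> T).

Definition df_info_algebra : Prop :=
  (forall a b c, comb a (comb b c) = comb (comb a b) c) /\
  (forall a b, comb a b = comb b a) /\
  (forall phi, comb phi e = phi) /\
  (forall phi x y, focus (focus phi x) y = focus phi (x `&` y)) /\
  (forall phi psi x, focus (comb (focus phi x) psi) x = comb (focus phi x) (focus psi x)) /\
  (forall phi, exists x, focus phi x = phi) /\
  (forall phi x, comb phi (focus phi x) = phi).

Definition dle (psi phi : T) : Prop := comb psi phi = phi.

Definition df_compact_base (Gamma : T -> Prop) : Prop :=
  (forall a b, Gamma a -> Gamma b -> Gamma (comb a b)) /\ Gamma e /\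
  (forall X : T -> Prop, (forall a, X a -> Gamma a) -> directed dle X ->
     exists s, is_sup_in dle allT X s) /\
  (forall (X : T -> Prop) phi, (forall a, X a -> Gamma a) -> directed dle X ->
     Gamma phi -> forall s, is_sup_in dle allT X s -> dle phi s ->
     exists psi, X psi /\ dle phi psi).

Definition df_compact : Prop :=
  df_info_algebra /\
  exists Gamma : T -> Prop, df_compact_base Gamma /\
    (forall phi, is_sup_in dle allT
        (fun psi => Gamma psi /\ way_below_in dle allT psi phi) phi).

Definition df_scompact : Prop :=
  df_info_algebra /\
  exists Gamma : T -> Prop, df_compact_base Gamma /\
    (forall phi x, is_sup_in dle allT
        (fun psi => Gamma psi /\ psi = focus psi x /\ way_below_in dle allT psi phi)
        (focus phi x)).

End DomainFree.
Arguments df_info_algebra {disp D T} comb e focus.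
Arguments df_compact {disp D T} comb e focus.
Arguments df_scompact {disp D T} comb e focus.

From Pilot Require Import Defs.
From mathcomp Require Import all_boot all_order.
From Stdlib Require Import FunctionalExtensionality PropExtensionality ProofIrrelevance.

Import Order.LTheory.
Local Open Scope order_scope.

(** A class [[phi]] is determined by [phi^{up top}], so [[phi] |-> phi^{up top}]
    identifies Phi/sigma with Phi_top: combination goes to combination, focusing
    [[phi]^{=> x}] goes to [((phi^{up top})^{down x})^{up top}], and the order is
    preserved and reflected.  Directed sets, suprema and the way-below relation
    therefore correspond, the finite elements of Phi/sigma are the classes of
    Phi_{f,top}, and density is density at level [top].  For strong density at
    [x], the elements of Phi_{f,x} way below [psi = (phi^{up top})^{down x}] have
    classes that are finite, fixed by focusing on [x] and way below [[phi]];
    an upper bound [u] of these classes satisfies [psi <= u^{down x}] in Phi_x,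
    hence [[phi]^{=> x} <= u]. *)

Section OrderFacts.
Context {T : Type} {le : T -> T -> Prop}.

Lemma is_sup_in_ext (P X Y : T -> Prop) s :
  (forall a, X a <-> Y a) -> is_sup_in le P X s -> is_sup_in le P Y s.
Proof.
move=> XY [Ps [ub lub]]; split=> //; split; first by move=> a /XY; apply: ub.
by move=> u Pu Yu; apply: lub => // a /XY; apply: Yu.
Qed.

Hypothesis le_refl : forall a, le a a.

Lemma way_below_in_le {P : T -> Prop} {a b} : P b -> way_below_in le P a b -> le a b.
Proof.
move=> Pb wab.
have dir_b : directed le (eq^~ b).
  by split; [exists b | move=> _ _ -> ->; exists b].
have sup_b : is_sup_in le P (eq^~ b) b.
  by split=> //; split=> [_ -> | u _ ub]; [apply: le_refl | apply: ub].
by have [_ [-> //]] := wab _ (fun _ E => eq_ind_r _ Pb E) dir_b b sup_b (le_refl b).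
Qed.

Hypothesis le_trans : forall a b c, le a b -> le b c -> le a c.

Lemma way_below_in_compact {P : T -> Prop} {a b} :
  way_below_in le P a a -> le a b -> way_below_in le P a b.
Proof. by move=> waa ab X XP dX s sX bs; exact: waa X XP dX s sX (le_trans _ _ _ ab bs). Qed.

End OrderFacts.


Section OrderEmbedding.
Context {T T' : Type} {le : T -> T -> Prop} {le' : T' -> T' -> Prop}.
Context {P : T' -> Prop} {f : T -> T'} {g : T' -> T}.
Hypothesis f_le : forall a b, le a b <-> le' (f a) (f b).
Hypothesis P_f : forall a, P (f a).
Hypothesis f_g : forall b, P b -> f (g b) = b.

Definition image_of (X : T -> Prop) (b : T') : Prop := exists2 a, X a & b = f a.

Lemma image_of_sub X b : image_of X b -> P b.
Proof. by case=> a _ ->. Qed.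

Lemma image_of_preim (Y : T' -> Prop) b :
  (forall b, Y b -> P b) -> image_of (fun a => Y (f a)) b <-> Y b.
Proof.
move=> YP; split=> [[a Ya ->] // | Yb].
by exists (g b); rewrite f_g //; apply: YP.
Qed.

Lemma directed_image_of {X} : directed le X -> directed le' (image_of X).
Proof.
case=> [[a0 Xa0] dX]; split; first by exists (f a0), a0.
move=> _ _ [a Xa ->] [b Xb ->]; have [c [Xc [ac bc]]] := dX a b Xa Xb.
by exists (f c); split; [exists c | split; apply/f_le].
Qed.

Lemma directed_preim {Y : T' -> Prop} :
  (forall b, Y b -> P b) -> directed le' Y -> directed le (fun a => Y (f a)).
Proof.
move=> YP [[b Yb] dY]; split; first by exists (g b); rewrite f_g //; apply: YP.
move=> a1 a2 Y1 Y2; have [c [Yc [l1 l2]]] := dY _ _ Y1 Y2.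
have fgc : f (g c) = c by apply/f_g/YP.
by exists (g c); rewrite fgc; split=> //; split; apply/f_le; rewrite fgc.
Qed.

Lemma is_sup_image_of X s :
  is_sup_in le Defs.allT X s <-> is_sup_in le' P (image_of X) (f s).
Proof.
split=> [[_ [ub lub]] | [_ [ub lub]]].
- split=> //; split=> [_ [a Xa ->] | u Pu Xu]; first exact/f_le/ub.
  rewrite -(f_g _ Pu); apply/f_le/lub => // a Xa.
  by apply/f_le; rewrite f_g //; apply: Xu; exists a.
- split=> //; split=> [a Xa | u _ Xu]; first by apply/f_le/ub; exists a.
  by apply/f_le/lub => // _ [a Xa ->]; apply/f_le/Xu.
Qed.

Lemma is_sup_preim (Y : T' -> Prop) s : (forall b, Y b -> P b) ->
  is_sup_in le' P Y (f s) <-> is_sup_in le Defs.allT (fun a => Y (f a)) s.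
Proof.
move=> YP; rewrite is_sup_image_of.
by split; apply: is_sup_in_ext => b; rewrite image_of_preim.
Qed.

Lemma way_below_image a b :
  way_below_in le Defs.allT a b <-> way_below_in le' P (f a) (f b).
Proof.
split=> [wab Y YP dY s' sY bs | wab X _ dX s sX bs].
- have fgs : f (g s') = s' by apply/f_g; case: sY.
  have sY' : is_sup_in le Defs.allT (fun a => Y (f a)) (g s').
    by apply/is_sup_preim => //; rewrite fgs.
  have bs' : le b (g s') by apply/f_le; rewrite fgs.
  have [c [Yc ac]] := wab _ (fun _ _ => I) (directed_preim YP dY) _ sY' bs'.
  by exists (f c); split=> //; apply/f_le.
- have [_ [[c Xc ->] ac]] := wab _ (@image_of_sub X) (directed_image_of dX) _
    (proj1 (is_sup_image_of X s) sX) (proj1 (f_le _ _) bs).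
  by exists c; split=> //; apply/f_le.
Qed.

End OrderEmbedding.
Arguments image_of {T T'} f X b.

Section LabeledAlgebra.
Context {disp : Order.disp_t} {D : tLatticeType disp} (A : LSig D).
Hypothesis HA : labeled_info_algebra A.
Local Notation Phi := (car A).
Local Notation d := (lab A).
Local Notation comb := (lcomb A).
Local Notation marg := (lmarg A).
Local Notation e := (lneut A).
Local Notation vac := (vac A).
Local Notation cls := (cls A).
Local Notation lle := (lle A).
Local Notation top_set := (Phi_x A \top).

Lemma combA a b c : comb a (comb b c) = comb (comb a b) c.
Proof. by case: HA => H _; apply: H. Qed.
Lemma combC a b : comb a b = comb b a.
Proof. by case: HA => _ [H _]; apply: H. Qed.
Lemma lab_neut s : d (e s) = s.
Proof. by case: HA => _ [_ [H _]]; apply: H. Qed.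
Lemma neut_combl {s} phi : d phi = s -> comb (e s) phi = phi.
Proof. by case: HA => _ [_ [_ [H _]]]; apply: H. Qed.
Lemma lab_comb a b : d (comb a b) = d a `|` d b.
Proof. by case: HA => _ [_ [_ [_ [H _]]]]; apply: H. Qed.
Lemma lab_marg {phi x} : x <= d phi -> d (marg phi x) = x.
Proof. by case: HA => _ [_ [_ [_ [_ [H _]]]]]; apply: H. Qed.
Lemma marg_marg phi {x y} : x <= y -> y <= d phi -> marg (marg phi y) x = marg phi x.
Proof. by case: HA => _ [_ [_ [_ [_ [_ [H _]]]]]]; apply: H. Qed.
Lemma marg_comb {x y} phi psi : d phi = x -> d psi = y ->
  marg (comb phi psi) x = comb phi (marg psi (x `&` y)).
Proof. by case: HA => _ [_ [_ [_ [_ [_ [_ [H _]]]]]]]; apply: H. Qed.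
Lemma marg_neut {x y} : x <= y -> marg (e y) x = e x.
Proof. by case: HA => _ [_ [_ [_ [_ [_ [_ [_ [H _]]]]]]]]; apply: H. Qed.
Lemma comb_marg phi x : x <= d phi -> comb phi (marg phi x) = phi.
Proof. by case: HA => _ [_ [_ [_ [_ [_ [_ [_ [_ H]]]]]]]]; apply: H. Qed.

Lemma neut_combr {s phi} : d phi = s -> comb phi (e s) = phi.
Proof. by move=> dphi; rewrite combC neut_combl. Qed.

Lemma marg_lab phi : marg phi (d phi) = phi.
Proof.
have := marg_comb phi (e (d phi)) erefl (lab_neut _).
by rewrite neut_combr // meetxx marg_neut // neut_combr.
Qed.

Lemma combxx phi : comb phi phi = phi.
Proof. by rewrite -{2}(marg_lab phi) comb_marg. Qed.

Lemma comb_neut y z : comb (e y) (e z) = e (y `|` z).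
Proof.
have absorb w : w <= y `|` z -> comb (e (y `|` z)) (e w) = e (y `|` z).
  by move=> hw; rewrite -(marg_neut hw) comb_marg // lab_neut.
have dyz : d (comb (e y) (e z)) = y `|` z by rewrite lab_comb !lab_neut.
by rewrite -(neut_combl _ dyz) combA !absorb // (leUl, leUr).
Qed.

Lemma vac_lab phi y : y <= d phi -> vac phi y = phi.
Proof.
move=> hy; rewrite /vac -{1}(neut_combr (erefl (d phi))) -combA comb_neut.
by rewrite join_l // neut_combr.
Qed.

Lemma lab_vac phi y : d (vac phi y) = d phi `|` y.
Proof. by rewrite lab_comb lab_neut. Qed.

Lemma vac_vac phi y z : vac (vac phi y) z = vac phi (y `|` z).
Proof. by rewrite /vac -combA comb_neut. Qed.

Lemma marg_vac_lab {chi w} : d chi <= w -> marg (vac chi w) (d chi) = chi.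
Proof.
move=> hw; rewrite (marg_comb _ _ erefl (lab_neut w)) meet_l // marg_neut //.
exact: neut_combr.
Qed.

Lemma marg_vac {chi x w} : x <= d chi -> d chi <= w ->
  marg (vac chi w) x = marg chi x.
Proof.
move=> hx hw; rewrite -(marg_marg _ hx) ?marg_vac_lab //.
by rewrite lab_vac join_r.
Qed.

Definition top_ext (phi : Phi) : Phi := vac phi \top.

Lemma lab_top_ext phi : d (top_ext phi) = \top.
Proof. by rewrite lab_vac joinx1. Qed.

Lemma top_ext_vac phi y : top_ext (vac phi y) = top_ext phi.
Proof. by rewrite /top_ext vac_vac joinx1. Qed.

Lemma top_ext_id {phi} : d phi = \top -> top_ext phi = phi.
Proof. by move=> dphi; rewrite /top_ext vac_lab // dphi. Qed.

Lemma top_ext_comb a b : top_ext (comb a b) = comb (top_ext a) (top_ext b).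
Proof.
rewrite /top_ext /vac -!combA (combA (e _) b) (combC (e _) b) -combA.
by rewrite comb_neut joinxx.
Qed.

Lemma marg_top_ext {m x} y : d m = x ->
  top_ext (marg (top_ext m) y) = top_ext (marg m (x `&` y)).
Proof.
move=> dm; rewrite -(top_ext_vac m (x `|` y)).
rewrite /top_ext marg_vac ?lex1 ?lab_vac ?dm ?joinA ?joinxx ?leUr //.
rewrite /vac -comb_neut combA (neut_combr dm) (combC m (e y)).
by rewrite (marg_comb _ _ (lab_neut y) dm) meetC (combC (e y)) -combA comb_neut joinx1.
Qed.

Lemma sigmaE phi psi : sigma A phi psi <-> top_ext phi = top_ext psi.
Proof.
split=> E; first by rewrite -(top_ext_vac phi (d phi `|` d psi)) E top_ext_vac.
have [hp hq] : d (vac phi (d phi `|` d psi)) = d phi `|` d psi /\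
               d (vac psi (d phi `|` d psi)) = d phi `|` d psi.
  by rewrite !lab_vac joinA joinxx joinCA joinxx.
have top_ext_K chi : marg (top_ext chi) (d chi) = chi by apply/marg_vac_lab/lex1.
by rewrite /sigma -[vac phi _]top_ext_K -[vac psi _]top_ext_K !top_ext_vac E hp hq.
Qed.

Lemma qpred_inj (q1 q2 : QT A) : qpred A q1 = qpred A q2 -> q1 = q2.
Proof.
case: q1 q2 => [p1 h1] [p2 h2] /= E; subst p2.
by rewrite (proof_irrelevance _ h1 h2).
Qed.

Lemma cls_eqE phi psi : cls phi = cls psi <-> top_ext phi = top_ext psi.
Proof.
split=> [/(congr1 (qpred A)) /= E | E].
  by apply/sigmaE; rewrite E; apply/sigmaE.
apply: qpred_inj; apply: functional_extensionality => chi.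
by apply: propositional_extensionality; rewrite /= !sigmaE E.
Qed.

Lemma cls_rep q : cls (rep A q) = q.
Proof.
apply: qpred_inj; rewrite /rep /=.
by case: (ClassicalEpsilon.constructive_indefinite_description _ _).
Qed.

Definition lift (q : QT A) : Phi := top_ext (rep A q).

Lemma lift_cls phi : lift (cls phi) = top_ext phi.
Proof. exact/cls_eqE/cls_rep. Qed.

Lemma cls_lift q : cls (lift q) = q.
Proof. by rewrite -{2}(cls_rep q); apply/cls_eqE; rewrite top_ext_vac. Qed.

Lemma lift_inj a b : lift a = lift b -> a = b.
Proof. by move=> E; rewrite -(cls_lift a) -(cls_lift b) E. Qed.

Lemma lab_lift q : d (lift q) = \top.
Proof. exact: lab_top_ext. Qed.

Lemma lab_marg_lift q x : d (marg (lift q) x) = x.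
Proof. by rewrite lab_marg // lab_lift lex1. Qed.

Lemma lift_clsK phi : d phi = \top -> lift (cls phi) = phi.
Proof. by move=> dphi; rewrite lift_cls top_ext_id. Qed.

Lemma lift_qcomb a b : lift (qcomb A a b) = comb (lift a) (lift b).
Proof. by rewrite lift_cls top_ext_comb. Qed.

Lemma lift_qneut : lift (qneut A) = e \top.
Proof. by rewrite lift_cls /top_ext /vac comb_neut joinxx. Qed.

Lemma lift_qfocus a x : lift (qfocus A a x) = top_ext (marg (lift a) x).
Proof.
rewrite lift_cls /lift; set r := rep A a.
have hx : x <= d (vac r (x `|` d r)) by rewrite lab_vac joinCA leUl.
by rewrite -(marg_vac hx (lex1 _)) -/(top_ext _) top_ext_vac.
Qed.

Lemma qinfo_algebra : df_info_algebra (qcomb A) (qneut A) (qfocus A).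
Proof.
split; first by move=> a b c; apply: lift_inj; rewrite !lift_qcomb combA.
split; first by move=> a b; apply: lift_inj; rewrite !lift_qcomb combC.
split.
  by move=> a; apply: lift_inj; rewrite lift_qcomb lift_qneut neut_combr // lab_lift.
split.
  move=> a x y; apply: lift_inj; rewrite !lift_qfocus (marg_top_ext _ (lab_marg_lift a x)).
  by rewrite marg_marg ?leIl // lab_lift lex1.
split.
  move=> a b x; apply: lift_inj; rewrite !(lift_qfocus, lift_qcomb).
  rewrite /top_ext /vac -combA (neut_combl _ (lab_lift b)).
  rewrite (marg_comb _ _ (lab_marg_lift a x) (lab_lift b)) meetx1.
  by rewrite -/(vac _ _) -/(top_ext _) top_ext_comb.
split.
  move=> a; exists \top; apply: lift_inj; rewrite lift_qfocus.
  by rewrite -{1}(lab_lift a) marg_lab /lift top_ext_vac.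
move=> a x; apply: lift_inj; rewrite lift_qcomb lift_qfocus /top_ext /vac combA.
by rewrite comb_marg ?lab_lift ?lex1 // neut_combr // lab_lift.
Qed.

Local Notation qle := (dle _ (qcomb A)).

Lemma qle_lift a b : qle a b <-> lle (lift a) (lift b).
Proof.
rewrite /dle /Defs.lle -lift_qcomb.
by split=> [-> // | E]; apply: lift_inj.
Qed.

Lemma lle_refl phi : lle phi phi.
Proof. exact: combxx. Qed.

Lemma lle_trans {a b c} : lle a b -> lle b c -> lle a c.
Proof. by rewrite /Defs.lle => ab bc; rewrite -bc combA ab. Qed.

Lemma marg_lle phi x : x <= d phi -> lle (marg phi x) phi.
Proof. by move=> hx; rewrite /Defs.lle combC comb_marg. Qed.

Lemma lle_marg a b x : d a = d b -> x <= d a -> lle a b -> lle (marg a x) (marg b x).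
Proof.
rewrite /Defs.lle => dab hx ab.
have mb : comb (marg a x) b = b by rewrite -ab combA (combC (marg a x)) comb_marg.
by rewrite -{2}mb (marg_comb _ _ (lab_marg hx) erefl) meet_l // -dab.
Qed.

Lemma lle_top_ext {a b} : lle a b -> lle (top_ext a) (top_ext b).
Proof. by rewrite /Defs.lle => ab; rewrite -top_ext_comb ab. Qed.

Lemma qle_refl q : qle q q.
Proof. exact/qle_lift/lle_refl. Qed.

Lemma qway_below_le p q : way_below_in qle Defs.allT p q -> qle p q.
Proof. exact: (way_below_in_le qle_refl (I : Defs.allT q)). Qed.

Lemma qway_below_lift p q :
  way_below_in qle Defs.allT p q <-> way_below_in lle top_set (lift p) (lift q).
Proof. exact: way_below_image qle_lift lab_lift lift_clsK p q. Qed.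

Lemma qfocus_mono p q x : qle p q -> qle (qfocus A p x) (qfocus A q x).
Proof.
move/qle_lift=> pq; apply/qle_lift; rewrite !lift_qfocus.
by apply/lle_top_ext/lle_marg; rewrite ?lab_lift ?lex1.
Qed.

Lemma qcompact_base (Gamma : D -> Phi -> Prop) : labeled_compact_base A Gamma ->
  df_compact_base _ (qcomb A) (qneut A) (fun q => Gamma \top (lift q)).
Proof.
move=> [_ [_ [Gcomb [Gneut [Gconv Gcpt]]]]].
have Gimage X : (forall q, X q -> Gamma \top (lift q)) ->
    forall b, image_of lift X b -> Gamma \top b by move=> XG _ [q Xq ->]; apply: XG.
have sup_image := is_sup_image_of qle_lift lab_lift lift_clsK.
split; first by move=> a b ga gb; rewrite lift_qcomb; apply: Gcomb.
split; first by rewrite lift_qneut.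
split=> [X XG dX | X q XG dX gq s sX qs].
  have [s' [s'top sX']] := Gconv \top _ (Gimage X XG) (directed_image_of qle_lift dX).
  by exists (cls s'); apply/sup_image; rewrite lift_clsK.
have [_ [[p Xp ->] qp]] := Gcpt \top _ (lift q) (Gimage X XG)
  (directed_image_of qle_lift dX) gq _ (proj1 (sup_image X s) sX) (proj1 (qle_lift _ _) qs).
by exists p; split=> //; apply/qle_lift.
Qed.

Definition qfinite (q : QT A) : Prop := Phi_f A \top (lift q).

Lemma qdensity :
  (forall phi, d phi = \top ->
     is_sup_in lle top_set (fun psi => Phi_f A \top psi /\ ll_x A \top psi phi) phi) ->
  forall q, is_sup_in qle Defs.allT
              (fun p => qfinite p /\ way_below_in qle Defs.allT p q) q.
Proof.
move=> dens q; have := dens _ (lab_lift q).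
move/(is_sup_preim qle_lift lab_lift lift_clsK _ _ (fun _ fin => proj1 (proj1 fin))).
by apply: is_sup_in_ext => p; split=> -[fin wb]; split=> //; apply/qway_below_lift.
Qed.

(* The approximants of [phi] in the strong density axiom, for Gamma = Phi_f. *)
Definition strong_approx (x : D) (phi chi : Phi) : Prop :=
  exists psi, x <= d psi /\ chi = marg psi x /\
    Phi_f A x chi /\ Phi_f A \top (comb chi (e \top)) /\ ll_x A x chi phi.

Lemma strong_approx_cls {q x chi} : strong_approx x (marg (lift q) x) chi ->
  [/\ qfinite (cls chi), cls chi = qfocus A (cls chi) x &
      way_below_in qle Defs.allT (cls chi) q].
Proof.
move=> [_ [_ [_ [[dchi _] [fin_top chi_m]]]]].
have m_x : Phi_x A x (marg (lift q) x) := lab_marg_lift q x.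
have chi_le : lle chi (marg (lift q) x) := way_below_in_le lle_refl m_x chi_m.
split; first by rewrite /qfinite lift_cls.
  apply: lift_inj; rewrite lift_qfocus lift_cls (marg_top_ext _ dchi) meetxx.
  by rewrite -dchi marg_lab.
apply/qway_below_lift; rewrite lift_cls.
apply: (way_below_in_compact (@lle_trans) (proj2 fin_top)).
rewrite -(top_ext_id (lab_lift q)); apply/lle_top_ext/(lle_trans chi_le).
by apply: marg_lle; rewrite lab_lift lex1.
Qed.

Lemma qstrong_density :
  (forall x phi, d phi = x -> is_sup_in lle (Phi_x A x) (strong_approx x phi) phi) ->
  forall q x, is_sup_in qle Defs.allT
    (fun p => qfinite p /\ p = qfocus A p x /\ way_below_in qle Defs.allT p q)
    (qfocus A q x).
Proof.
move=> sdens q x.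
apply/(is_sup_image_of qle_lift lab_lift lift_clsK); rewrite lift_qfocus.
set m := marg (lift q) x.
have [_ [_ m_lub]] := sdens x m (lab_marg_lift q x).
split; first exact: lab_top_ext.
split=> [_ [p [_ [pfix wpq]] ->] | u du u_ub].
  by rewrite -lift_qfocus; apply/qle_lift; rewrite pfix; apply/qfocus_mono/qway_below_le.
have chi_le chi : strong_approx x m chi -> lle chi (marg u x).
  move=> approx; have [fin fixed wb] := strong_approx_cls approx.
  have dchi : d chi = x by case: approx => [_ [_ [_ [[]]]]].
  have := u_ub _ (ex_intro2 _ _ (cls chi) (conj fin (conj fixed wb)) erefl).
  rewrite lift_cls -{2}(marg_vac_lab (lex1 (d chi))) dchi => chi_u.
  by apply: lle_marg; rewrite ?lab_top_ext ?du ?lex1.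
have m_u : lle m (marg u x) by apply: m_lub chi_le; rewrite /Phi_x lab_marg // du lex1.
apply: (lle_trans (lle_top_ext m_u)); rewrite -{2}(top_ext_id du).
by apply/lle_top_ext/marg_lle; rewrite du lex1.
Qed.

End LabeledAlgebra.

Theorem theorem4p11 (disp : Order.disp_t) (D : tLatticeType disp)
    (A : LSig D) :
  (labeled_compact A (Phi_f A) ->
     df_compact (qcomb A) (qneut A) (qfocus A)) /\
  (labeled_scompact A (Phi_f A) ->
     df_scompact (qcomb A) (qneut A) (qfocus A)).
Proof.
split=> [[base dens] | [base sdens]]; have HA := proj1 base.
- split; first exact: qinfo_algebra.
  exists (qfinite A); split; first exact: qcompact_base.
  by apply: qdensity => // phi; apply: dens.
- split; first exact: qinfo_algebra.
  exists (qfinite A); split; first exact: qcompact_base.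
  exact: qstrong_density.
Qed.
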